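(* Let $s>2$ be an integer, $A_s=\{0,1,\dots,s-1\}$, and let $A_0,A_1$ be disjoint subsets of $A_s$ with $A_0\cup A_1=A_s$, $A_0\neq A_s\neq A_1$. Let $f:[0,1]\to[0,1]$ be defined by $$f\big(\Delta^{s*}_{\alpha_1\alpha_2\dots\alpha_n\dots}\big)=\Delta^{2*}_{\beta_1\beta_2\dots\beta_n\dots},$$ where $\beta_1=0$ if $\alpha_1\in A_0$, $\beta_1=1$ if $\alpha_1\in A_1$, and for $n\ge 1$, $\beta_{n+1}=\beta_n$ if $\alpha_{n+1}=\alpha_n$ and $\beta_{n+1}=1-\beta_n$ if $\alpha_{n+1}\neq\alpha_n$. Then $f$ is continuous on $[0,1]$ and has unbounded (infinite) total variation on $[0,1]$.
   Context: $L_s=A_s\times A_s\times\cdots$ denotes the space of sequences $(\alpha_n)$ with $\alpha_n\in A_s$. The $s*$-representation is an encoding of $[0,1]$ topologically equivalent to the classical $s$-adic one: there is a continuous strictly monotone surjection $h_s:[0,1]\to[0,1]$ such that $\Delta^{s*}_{\alpha_1\alpha_2\dots}=h_s\big(\sum_{n\ge1}\alpha_n s^{-n}\big)$ for every $(\alpha_n)\in L_s$. Likewise the $2*$-representation is given by a continuous strictly monotone surjection $h_2:[0,1]\to[0,1]$ via $\Delta^{2*}_{\beta_1\beta_2\dots}=h_2\big(\sum_{n\ge1}\beta_n 2^{-n}\big)$, $\beta_n\in\{0,1\}$. The value of $f(x)$ given by the formula does not depend on which $s*$-code of $x$ is used, so $f$ is a well-defined function on $[0,1]$. *)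

From HB Require Import structures.
From mathcomp Require Import all_boot all_order all_algebra.
From mathcomp Require Import all_classical all_reals all_analysis.
Set Implicit Arguments. Unset Strict Implicit. Unset Printing Implicit Defensive.
Import Order.TTheory GRing.Theory Num.Theory.
Import numFieldNormedType.Exports.
Local Open Scope classical_set_scope.
Local Open Scope ring_scope.

(* Binary digit sequence beta_1 beta_2 ... (indexed from 0: beta n = beta_{n+1})
   built from the s-ary digit sequence alpha (alpha n = alpha_{n+1}):
   beta_1 = 1 iff alpha_1 \in A1 (i.e. = 0 iff alpha_1 \in A0);
   beta_{n+1} = beta_n if alpha_{n+1} = alpha_n, else 1 - beta_n. *)
Fixpoint beta_seq (s : nat) (A1 : {set 'I_s}) (alpha : nat -> 'I_s) (n : nat) : bool :=
  match n with
  | 0 => alpha 0 \in A1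
  | k.+1 => if alpha k.+1 == alpha k then beta_seq A1 alpha k
            else ~~ beta_seq A1 alpha k
  end.

Definition sadic_value (R : realType) (s : nat) (alpha : nat -> 'I_s) : R :=
  limn (fun N : nat => \sum_(0 <= n < N) ((nat_of_ord (alpha n))%:R / (s%:R ^+ n.+1) : R)).

Definition binary_value (R : realType) (beta : nat -> bool) : R :=
  limn (fun N : nat => \sum_(0 <= n < N) ((nat_of_bool (beta n))%:R / (2%:R ^+ n.+1) : R)).

Definition coding_map (R : realType) (h : R -> R) : Prop :=
  {within `[0, 1]%classic, continuous h} /\
  ({in `[0, 1]%classic &, forall x y, x < y -> h x < h y} \/
   {in `[0, 1]%classic &, forall x y, x < y -> h y < h x}) /\
  h @` `[0, 1]%classic = `[0, 1]%classic.

(* The rank-m s-adic cylinder of a code a is mapped by f into the h_2-image of the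
   rank-m binary cylinder of beta(a).  Continuity: codes with close values lie in equal
   or adjacent rank-m cylinders, and the two codes of the common endpoint of adjacent
   cylinders have the same binary value, so the binary values differ by at most
   2 * 2^-m.  Unbounded variation: let V(a, m) be the variation of f over the image of
   the cylinder and J(a, m) the length of the h_2-image of the binary cylinder.  A
   cylinder whose last digit is d contains the subcylinder continuing with d and, as
   s > 2, two more whose binary cylinder is the half where the bit flips, of length
   J(a, m) - J(a, m + 1).  Following the constant continuation and using J -> 0 turns
   V >= K J into V >= 2 K J, so V >= 2^k J for all k, which a finite total variation
   forbids. *)

From HB Require Import structures.
From mathcomp Require Import all_boot all_order all_algebra.
From mathcomp Require Import all_classical all_reals all_analysis.
From mathcomp Require Import ring lra zify.
Import Order.TTheory GRing.Theory Num.Theory.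
Import numFieldNormedType.Exports.

Set Implicit Arguments. Unset Strict Implicit. Unset Printing Implicit Defensive.
Local Open Scope classical_set_scope.
Local Open Scope ring_scope.

Section RadixExpansion.
Variable R : realType.
Variable r : nat.
Hypothesis r_gt1 : (1 < r)%N.
Implicit Types (d : nat -> nat) (N : nat).

Definition radix_sum d N : R := \sum_(0 <= n < N) ((d n)%:R / (r%:R ^+ n.+1) : R).
Definition radix_value d : R := limn (radix_sum d).

Fixpoint radix_nat d N : nat :=
  if N is N'.+1 then (r * radix_nat d N' + d N')%N else 0%N.

Let r_gt0 : 0 < r%:R :> R.
Proof. by rewrite ltr0n (ltn_trans _ r_gt1). Qed.

Let invexp_gt0 N : 0 < r%:R ^- N :> R.
Proof. by rewrite invr_gt0 exprn_gt0. Qed.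

Lemma radix_sum0 d : radix_sum d 0 = 0.
Proof. by rewrite /radix_sum big_geq. Qed.

Lemma radix_sumS d N : radix_sum d N.+1 = radix_sum d N + (d N)%:R / r%:R ^+ N.+1.
Proof. by rewrite /radix_sum big_nat_recr. Qed.

Lemma eq_radix_sum d d' N : {in gtn N, d =1 d'} -> radix_sum d N = radix_sum d' N.
Proof. by move=> dd'; apply: eq_big_nat => n /andP[_ nN]; rewrite dd'. Qed.

Lemma radix_sum_ge0 d N : 0 <= radix_sum d N.
Proof. by rewrite sumr_ge0 // => n _; rewrite divr_ge0 // ltW. Qed.

Lemma radix_sum_nat d N : radix_sum d N = (radix_nat d N)%:R / r%:R ^+ N.
Proof.
elim: N => [|N IH]; first by rewrite radix_sum0 mul0r.
rewrite radix_sumS IH /= natrD natrM exprS.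
by field; rewrite expf_neq0 ?gt_eqF.
Qed.

Lemma radix_sum_shift d N M :
  radix_sum d (N + M) = radix_sum d N + r%:R ^- N * radix_sum (fun n => d (N + n)%N) M.
Proof.
elim: M => [|M IH]; first by rewrite addn0 radix_sum0 mulr0 addr0.
rewrite addnS !radix_sumS IH mulrDr addrA -addnS exprD.
by congr (_ + _); field; rewrite !expf_neq0 ?gt_eqF.
Qed.

Section Digits.
Variable d : nat -> nat.
Hypothesis d_lt : forall n, (d n < r)%N.

Lemma radix_sum_le N : radix_sum d N <= 1 - r%:R ^- N.
Proof.
elim: N => [|N IH]; first by rewrite radix_sum0 expr0 invr1 subrr.
have dN : (d N)%:R + 1 <= r%:R :> R by rewrite natr1 ler_nat.
move: IH; rewrite radix_sumS.
have -> : r%:R ^- N = r%:R * r%:R ^- N.+1 :> R.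
  by rewrite exprS invfM mulrA mulfV ?mul1r // gt_eqF.
have := invexp_gt0 N.+1; set e := r%:R ^- N.+1 => e_gt0 IH; nra.
Qed.

Lemma is_cvg_radix_sum : cvgn (radix_sum d).
Proof.
apply: nondecreasing_is_cvgn.
  by apply/nondecreasing_seqP => N; rewrite radix_sumS lerDl divr_ge0 // ltW.
exists 1 => _ [N _ <-] /=; apply: le_trans (radix_sum_le N) _.
by rewrite gerBl ltW.
Qed.

Lemma radix_value_itv : 0 <= radix_value d <= 1.
Proof.
apply/andP; split.
  by apply: limr_ge is_cvg_radix_sum _; apply: nearW => N; exact: radix_sum_ge0.
apply: limr_le is_cvg_radix_sum _; apply: nearW => N.
by apply: le_trans (radix_sum_le N) _; rewrite gerBl ltW.
Qed.

End Digits.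

Lemma radix_value_shift d (d_lt : forall n, (d n < r)%N) N :
  radix_value d = radix_sum d N + r%:R ^- N * radix_value (fun n => d (N + n)%N).
Proof.
have d_lt' n : (d (N + n) < r)%N by [].
have := is_cvg_radix_sum d_lt' => cvg_tail.
apply: cvg_lim => //; rewrite -(cvg_shiftn N) /=.
under eq_fun do rewrite addnC radix_sum_shift.
by apply: cvgD; [exact: cvg_cst | exact: cvgMl_tmp].
Qed.

Lemma radix_value_bounds d (d_lt : forall n, (d n < r)%N) N :
  radix_sum d N <= radix_value d <= radix_sum d N + r%:R ^- N.
Proof.
rewrite (radix_value_shift d_lt N).
have /andP[V0 V1] := @radix_value_itv (fun n => d (N + n)%N) (fun n => d_lt _).
by rewrite lerDl lerD2l mulr_ge0 ?ler_piMr // ltW.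
Qed.

Lemma radix_value_cst c : (c < r)%N -> radix_value (fun=> c) = c%:R / (r%:R - 1).
Proof.
move=> c_lt; have := @radix_value_shift (fun=> c) (fun=> c_lt) 1.
rewrite radix_sumS radix_sum0 add0r expr1 /=; set V := radix_value _ => e.
have r1 : r%:R - 1 != 0 :> R by rewrite subr_eq0 pnatr_eq1 gtn_eqF.
have eV : V * r%:R = c%:R + V by rewrite {1}e; field; rewrite gt_eqF.
by apply: (mulIf r1); rewrite divfK // mulrBr mulr1 eV addrK.
Qed.

Lemma radix_nat_inj d d' N : (forall n, (d n < r)%N) -> (forall n, (d' n < r)%N) ->
  radix_nat d N = radix_nat d' N -> {in gtn N, d =1 d'}.
Proof.
move=> d_lt d'_lt; elim: N => [|N IH] //= e.
move: (congr1 (edivn^~ r) e); rewrite !(mulnC r) !edivn_eq // => -[/IH dd' dN] n.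
by rewrite inE ltnS leq_eqVlt => /predU1P[-> // | /dd'].
Qed.

Lemma invexpn_le m n : (m <= n)%N -> r%:R ^- n <= r%:R ^- m :> R.
Proof.
move=> mn; rewrite lef_pV2 ?posrE ?exprn_gt0 //.
by rewrite ler_weXn2l // ler1n ltnW.
Qed.

Lemma invexpn_lt e : 0 < e -> exists n, r%:R ^- n < e :> R.
Proof.
move=> e_gt0; pose n := (Num.truncn e^-1).+1; exists n.
have : 0 <= e^-1 by rewrite invr_ge0 ltW.
move=> /truncn_itv /andP[_ e_inv].
have n_exp : n%:R <= r%:R ^+ n :> R by rewrite -natrX ler_nat ltnW // ltn_expl.
by rewrite -[e]invrK ltf_pV2 ?posrE ?exprn_gt0 ?invr_gt0 // (lt_le_trans e_inv).
Qed.

Lemma eq0_le_invexpn (x : R) : (forall n, `|x| <= r%:R ^- n :> R) -> x = 0.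
Proof.
move=> x_le; apply/normr0_eq0/eqP; rewrite eq_le normr_ge0 andbT.
apply/ler_addgt0Pr => e e_gt0; have [n /ltW] := invexpn_lt e_gt0.
by rewrite add0r; apply: le_trans.
Qed.

Definition radix_digits (y : R) n := (Num.truncn (y * r%:R ^+ n.+1) %% r)%N.

Lemma radix_nat_digits y N : 0 <= y < 1 ->
  radix_nat (radix_digits y) N = Num.truncn (y * r%:R ^+ N).
Proof.
case/andP => y_ge0 y_lt1; elim: N => [|N IH] /=.
  by rewrite expr0 mulr1; apply/esym/truncn_def; rewrite y_ge0 y_lt1.
have z_ge0 : 0 <= y * r%:R ^+ N by rewrite mulr_ge0 // exprn_ge0 // ltW.
rewrite IH /radix_digits.
have -> : y * r%:R ^+ N.+1 = r%:R * (y * r%:R ^+ N) by rewrite exprS; ring.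
move: (y * r%:R ^+ N) z_ge0 => z z_ge0.
have rz_ge0 : 0 <= r%:R * z by rewrite mulr_ge0 // ltW.
have /andP[k_le k_lt] := truncn_itv z_ge0.
have K_ge : (r * Num.truncn z <= Num.truncn (r%:R * z))%N.
  by rewrite truncn_ge_nat // natrM ler_pM2l.
have K_lt : (Num.truncn (r%:R * z) < r * (Num.truncn z).+1)%N.
  by rewrite truncn_lt_nat // natrM ltr_pM2l.
move: K_ge K_lt; set k := Num.truncn z; set K := Num.truncn _ => K_ge K_lt.
have K_div : (K %/ r)%N = k.
  apply/eqP; rewrite eqn_leq -ltnS ltn_divLR ?leq_divRL ?(ltnW r_gt1) //.
  by rewrite ![(_ * r)%N]mulnC K_ge K_lt.
by rewrite [RHS](divn_eq K r) K_div mulnC.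
Qed.

Lemma radix_value_digits y : 0 <= y < 1 -> radix_value (radix_digits y) = y.
Proof.
move=> y_itv; have digits_lt n : (radix_digits y n < r)%N by rewrite ltn_pmod // ltnW.
apply/eqP; rewrite -subr_eq0; apply/eqP/eq0_le_invexpn => n.
have /andP[lo hi] := radix_value_bounds digits_lt n.
rewrite radix_sum_nat radix_nat_digits // in lo hi.
have /andP[y_ge0 _] := y_itv.
have /andP[k_le k_lt] := truncn_itv (mulr_ge0 y_ge0 (exprn_ge0 n (ltW r_gt0))).
move: k_le k_lt lo hi; set k := Num.truncn _ => k_le k_lt lo hi.
have u_gt0 := invexp_gt0 n; rewrite -natr1 in k_lt.
have ey : y = y * r%:R ^+ n * r%:R ^- n by rewrite mulfK // gt_eqF ?exprn_gt0.
have ky : k%:R * r%:R ^- n <= y by rewrite [leRHS]ey ler_pM2r.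
have yk : y < (k%:R + 1) * r%:R ^- n by rewrite [ltLHS]ey ltr_pM2r.
rewrite mulrDl mul1r in yk.
by rewrite ler_norml; apply/andP; split; lra.
Qed.

End RadixExpansion.

Section RealFunctions.
Variable R : realType.
Implicit Types (A : set R) (f g h : R -> R) (a b x y z : R).

Lemma continuous_withinP A g : {within A, continuous g} <->
  forall x, A x -> forall e, 0 < e ->
    exists2 d, 0 < d & forall y, A y -> `|x - y| < d -> `|g x - g y| < e.
Proof.
split=> [/subspace_continuousP g_cont x Ax e e_gt0 | g_near].
  have /cvgrPdist_lt/(_ e e_gt0) := g_cont x Ax.
  rewrite near_withinE => /nbhs_ballP[d /= d_gt0 gd].
  by exists d => // y Ay xy; apply: gd.
apply/subspace_continuousP => x Ax; apply/cvgrPdist_lt => e e_gt0.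
have [d d_gt0 gd] := g_near x Ax e e_gt0.
by rewrite near_withinE; apply/nbhs_ballP; exists d => //= y xy Ay; apply: gd.
Qed.

Lemma coding_map_itv h x : coding_map h -> 0 <= x <= 1 -> 0 <= h x <= 1.
Proof.
case=> _ [_ h_img] x01.
have : `[0, 1]%classic (h x) by rewrite -h_img; exists x => //=; rewrite in_itv.
by rewrite /= in_itv.
Qed.

Lemma coding_map_near h x e : coding_map h -> 0 <= x <= 1 -> 0 < e ->
  exists2 d, 0 < d & forall y, 0 <= y <= 1 -> `|x - y| < d -> `|h x - h y| < e.
Proof.
case=> /continuous_withinP h_near _ x01 e_gt0.
have [|d d_gt0 hd] := h_near x _ e e_gt0; first by rewrite /= in_itv.
by exists d => // y y01; apply: hd; rewrite /= in_itv.
Qed.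

Lemma coding_map_inj h : coding_map h -> {in `[0, 1] &, injective h}.
Proof.
case=> _ [h_mono _] x y /mem_set x01 /mem_set y01 hxy; apply/eqP; rewrite eq_le !leNgt.
by apply/andP; split; apply/negP => lt; case: h_mono => mono;
  first [have := mono _ _ x01 y01 lt | have := mono _ _ y01 x01 lt]; rewrite hxy ltxx.
Qed.

Lemma coding_map_homo h : coding_map h ->
  {in `[0, 1] &, {homo h : x y / x <= y}} \/ {in `[0, 1] &, {homo h : x y /~ x <= y}}.
Proof.
case=> _ [[inc|dec] _]; [left|right] => x y /mem_set x01 /mem_set y01.
  by rewrite le_eqVlt => /predU1P[->//|/inc]; move/(_ x01 y01)/ltW.
by rewrite le_eqVlt => /predU1P[->//|/dec]; move/(_ y01 x01)/ltW.
Qed.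

Lemma coding_map_inverse_near h y0 eta : coding_map h -> 0 <= y0 <= 1 -> 0 < eta ->
  exists2 d, 0 < d & forall y, 0 <= y <= 1 -> `|h y0 - h y| < d -> `|y0 - y| < eta.
Proof.
move=> h_code y0_itv eta_gt0; have [h_cont _] := h_code.
have h_inj : {in `[0, 1]%classic &, injective h}.
  by move=> u v /set_mem u01 /set_mem v01; exact: coding_map_inj.
have hK : {in `[0, 1], cancel h ('pinv_(fun=> 0) `[0, 1]%classic h)}.
  by move=> x x01; exact: pinvKV h_inj _ (mem_set x01).
have h_img u : 0 <= u <= 1 -> (h @`[0, 1])%classic (h u).
  move=> u01; apply: mono_mem_image_segment; last by rewrite in_itv.
  exact: coding_map_homo.
have := segment_can_continuous ler01 h_cont hK => /continuous_withinP.
move=> /(_ _ (h_img _ y0_itv) eta eta_gt0)[d d_gt0 hd]; exists d => // y y_itv hy.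
rewrite -(hK y0) ?in_itv // -[y in `|_ - y|](hK y) ?in_itv //.
exact: hd (h_img _ y_itv) hy.
Qed.

End RealFunctions.

Section Between.
Variable R : realType.
Implicit Types (f : R -> R) (a b x y z : R).

Definition between x y z := (x <= y <= z) || (z <= y <= x).

Lemma between_sym x y z : between x y z = between z y x.
Proof. by rewrite /between orbC. Qed.

Lemma dist_between x y z : between x y z -> `|z - x| = `|z - y| + `|y - x|.
Proof.
case/orP => /andP[xy yz].
  by rewrite !ger0_norm ?subr_ge0 ?(le_trans xy) //; lra.
by rewrite !ler0_norm ?subr_le0 ?(le_trans yz) //; lra.
Qed.

Definition tv_between f x y : \bar R :=
  total_variation (Num.min x y) (Num.max x y) f.

Lemma tv_betweenC f x y : tv_between f x y = tv_between f y x.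
Proof. by rewrite /tv_between minC maxC. Qed.

Lemma tv_between_le f x y : x <= y -> tv_between f x y = total_variation x y f.
Proof. by move=> xy; rewrite /tv_between (min_idPl xy) (max_idPr xy). Qed.

Lemma tv_between_ge f x y : (`|f x - f y|%:E <= tv_between f x y)%E.
Proof.
wlog xy : x y / x <= y.
  by move=> wlog_le; case: (leP x y) => [/wlog_le//|/ltW/wlog_le]; rewrite distrC tv_betweenC.
by rewrite tv_between_le // distrC total_variation_ge.
Qed.

Lemma tv_between_ge0 f x y : (0 <= tv_between f x y)%E.
Proof. exact: le_trans (tv_between_ge f x y). Qed.

Lemma tv_between_add f x y z : between x y z ->
  tv_between f x z = (tv_between f x y + tv_between f y z)%E.
Proof.
wlog xz : x z / x <= z.
  move=> wlog_le; case: (leP x z) => [/wlog_le//|/ltW zx].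
  by rewrite between_sym tv_betweenC addeC (tv_betweenC _ y) (tv_betweenC _ x) => /wlog_le->.
case/orP => /andP[xy yz].
  by rewrite !tv_between_le ?(le_trans xy) // (total_variationD f xy yz).
have ey : y = x by apply: le_anti; rewrite yz (le_trans xz xy).
have ez : z = x by apply: le_anti; rewrite (le_trans xy yz) xz.
by rewrite ey ez tv_between_le // total_variationxx adde0.
Qed.

Lemma tv_between_le_total_variation f a b x y : a <= x <= b -> a <= y <= b ->
  (tv_between f x y <= total_variation a b f)%E.
Proof.
wlog xy : x y / x <= y.
  move=> wlog_le xab yab; case: (leP x y) => [xy|/ltW yx]; first exact: wlog_le.
  by rewrite tv_betweenC; apply: wlog_le.
case/andP=> ax _ /andP[_ yb].
rewrite tv_between_le // (total_variationD f ax (le_trans xy yb)) (total_variationD f xy yb).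
by apply: lee_paddl; [exact: total_variation_ge0 | apply: leeDl; exact: total_variation_ge0].
Qed.

End Between.

Section ImageVariation.
Variable R : realType.
Variables f h : R -> R.
Hypothesis h_code : coding_map h.
Variable M : R.
Hypothesis f_bv : total_variation 0 1 f = M%:E.
Implicit Types u v w : R.

Definition image_variation u v := fine (tv_between f (h u) (h v)).

Lemma coding_map_between u v w : 0 <= u -> u <= v -> v <= w -> w <= 1 ->
  between (h u) (h v) (h w).
Proof.
move=> u0 uv vw w1; have in01 (x : R) : 0 <= x -> x <= 1 -> x \in `[0, 1].
  by move=> x0 x1; rewrite in_itv /= x0 x1.
have u01 := in01 u u0 (le_trans uv (le_trans vw w1)).
have v01 := in01 v (le_trans u0 uv) (le_trans vw w1).
have w01 := in01 w (le_trans u0 (le_trans uv vw)) w1.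
have [mono|mono] := coding_map_homo h_code.
  by apply/orP; left; rewrite (mono u v) ?(mono v w).
by apply/orP; right; rewrite (mono w v) ?(mono v u).
Qed.

Lemma image_variation_ge0 u v : 0 <= image_variation u v.
Proof. exact/fine_ge0/tv_between_ge0. Qed.

Section UnitIntervalEndpoints.
Variables u v : R.
Hypotheses (u_itv : 0 <= u <= 1) (v_itv : 0 <= v <= 1).

Lemma image_variationE : tv_between f (h u) (h v) = (image_variation u v)%:E.
Proof.
have := tv_between_le_total_variation f (coding_map_itv h_code u_itv) (coding_map_itv h_code v_itv).
rewrite f_bv /image_variation => tv_le.
by rewrite fineK // ge0_fin_numE ?tv_between_ge0 // (le_lt_trans tv_le) ?ltry.
Qed.

Lemma image_variation_le : image_variation u v <= M.
Proof.
have := tv_between_le_total_variation f (coding_map_itv h_code u_itv) (coding_map_itv h_code v_itv).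
by rewrite f_bv image_variationE lee_fin.
Qed.

Lemma image_variation_ge_dist : `|f (h u) - f (h v)| <= image_variation u v.
Proof. by rewrite -lee_fin -image_variationE tv_between_ge. Qed.

End UnitIntervalEndpoints.

Lemma image_variation_add u v w : 0 <= u -> u <= v -> v <= w -> w <= 1 ->
  image_variation u w = image_variation u v + image_variation v w.
Proof.
move=> u0 uv vw w1; have in01 (x : R) : 0 <= x -> x <= 1 -> 0 <= x <= 1 by move=> -> ->.
have u01 := in01 u u0 (le_trans uv (le_trans vw w1)).
have v01 := in01 v (le_trans u0 uv) (le_trans vw w1).
have w01 := in01 w (le_trans u0 (le_trans uv vw)) w1.
apply: EFin_inj; rewrite EFinD -!image_variationE //.
exact/tv_between_add/coding_map_between.
Qed.

Lemma image_variation_sub l u v r : 0 <= l -> l <= u -> u <= v -> v <= r -> r <= 1 ->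
  image_variation u v <= image_variation l r.
Proof.
move=> l0 lu uv vr r1.
rewrite (@image_variation_add l u) ?(le_trans uv vr) ?(le_trans (le_trans lu uv) vr) //.
rewrite (@image_variation_add u v r) ?(le_trans l0 lu) //.
by rewrite addrCA lerDl addr_ge0 ?image_variation_ge0.
Qed.

Lemma image_variation_dist_le l r u v : 0 <= l -> l <= u <= r -> l <= v <= r -> r <= 1 ->
  `|f (h u) - f (h v)| <= image_variation l r.
Proof.
wlog uv : u v / u <= v.
  move=> wlog_le l0 ulr vlr r1; case: (leP u v) => [uv|/ltW vu]; first exact: wlog_le.
  by rewrite distrC; apply: wlog_le.
move=> l0 /andP[lu ur] /andP[lv vr] r1; apply: le_trans (image_variation_sub l0 lu uv vr r1).
by apply: image_variation_ge_dist; apply/andP; split; lra.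
Qed.

Lemma image_variation_telescope p e k : 0 <= p -> 0 <= e -> p + k%:R * e <= 1 ->
  image_variation p (p + k%:R * e) =
  \sum_(i < k) image_variation (p + i%:R * e) (p + i%:R * e + e).
Proof.
move=> p0 e0; elim: k => [|k IH] pke.
  by rewrite big_ord0 mul0r addr0 /image_variation tv_between_le // total_variationxx.
have pk_le : p + k%:R * e <= 1 by apply: le_trans pke; rewrite lerD2l ler_wpM2r // ler_nat.
rewrite big_ord_recr /= -IH //; rewrite -natr1 mulrDl mul1r addrA in pke *.
by apply: image_variation_add; rewrite ?lerDl ?mulr_ge0.
Qed.

End ImageVariation.

Section Codes.
Variable R : realType.
Variable s : nat.
Hypothesis s_gt1 : (1 < s)%N.
Variable A1 : {set 'I_s}.
Implicit Types (a : nat -> 'I_s) (m : nat) (c : 'I_s).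

Definition pad a m c : nat -> 'I_s := fun n => if (n < m)%N then a n else c.

Local Notation beta := (beta_seq A1).

Definition sadic_sum a m : R := radix_sum R s (fun n => a n) m.
Definition beta_sum a m : R := radix_sum R 2 (fun n => beta a n) m.

Lemma beta_seq_prefix a a' n :
  (forall i, (i <= n)%N -> a i = a' i) -> beta a n = beta a' n.
Proof.
elim: n => [|n IH] aa' /=; first by rewrite aa'.
by rewrite !aa' // IH // => i /leqW; apply: aa'.
Qed.

Lemma beta_seq_pad_tail a m c k : beta (pad a m c) (m + k) = beta (pad a m c) m.
Proof.
elim: k => [|k IH]; first by rewrite addn0.
by rewrite addnS /= IH /pad !ltnNge -addnS !leq_addr /= eqxx.
Qed.

Lemma beta_seq_padS a m c :
  beta (pad a m.+1 c) m.+1 = if c == a m then beta a m else ~~ beta a m.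
Proof.
rewrite /= {1 2}/pad ltnn ltnSn (@beta_seq_prefix _ a) // => i im.
by rewrite /pad ltnS im.
Qed.

Lemma pad_id a m : pad a m.+1 (a m) = pad a m (a m).
Proof.
by apply/funext => n; rewrite /pad ltnS leq_eqVlt; case: eqVneq => [->|]; case: ltnP.
Qed.

Lemma eq_sadic_sum a a' m : {in gtn m, a =1 a'} -> sadic_sum a m = sadic_sum a' m.
Proof. by move=> aa'; apply: eq_radix_sum => n /aa' ->. Qed.

Lemma eq_beta_sum a a' m : {in gtn m, a =1 a'} -> beta_sum a m = beta_sum a' m.
Proof.
move=> aa'; apply: eq_radix_sum => n nm; congr (nat_of_bool _).
by apply: beta_seq_prefix => i im; apply: aa'; rewrite inE (leq_ltn_trans im).
Qed.

Lemma sadic_sum_pad a m c : sadic_sum (pad a m c) m = sadic_sum a m.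
Proof. by apply: eq_sadic_sum => n; rewrite inE /pad => ->. Qed.

Lemma beta_sum_pad a m c : beta_sum (pad a m c) m = beta_sum a m.
Proof. by apply: eq_beta_sum => n; rewrite inE /pad => ->. Qed.

Lemma beta_sumS a m : beta_sum a m.+1 = beta_sum a m + (beta a m)%:R / 2%:R ^+ m.+1.
Proof. exact: radix_sumS. Qed.

Lemma sadic_sum_padS a m c :
  sadic_sum (pad a m c) m.+1 = sadic_sum a m + c%:R / s%:R ^+ m.+1.
Proof. by rewrite /sadic_sum radix_sumS -/(sadic_sum _ _) sadic_sum_pad /pad ltnn. Qed.

Lemma sadic_sum_le a m : sadic_sum a m + s%:R ^- m <= 1.
Proof. by rewrite -lerBrDr radix_sum_le. Qed.

Lemma beta_sum_le a m : beta_sum a m + 2%:R ^- m <= 1.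
Proof. by rewrite -lerBrDr radix_sum_le // => n; case: (beta a n). Qed.

Lemma pad_prefix a m : {in gtn m.+1, pad a m (a m) =1 a}.
Proof. by move=> n; rewrite inE ltnS /pad leq_eqVlt => /predU1P[->|->]; rewrite ?ltnn. Qed.

Definition cylinder_index a m := radix_nat s (fun n => a n) m.

Lemma sadic_sum_index a m : sadic_sum a m = (cylinder_index a m)%:R / s%:R ^+ m.
Proof. exact: radix_sum_nat. Qed.

Lemma eq_beta_sum_index a a' m :
  cylinder_index a m = cylinder_index a' m -> beta_sum a m = beta_sum a' m.
Proof.
move=> e; apply: eq_beta_sum => n nm; apply: val_inj.
exact: radix_nat_inj (fun n => ltn_ord (a n)) (fun n => ltn_ord (a' n)) e _ nm.
Qed.

Lemma sadic_value_bounds a m :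
  sadic_sum a m <= sadic_value R a <= sadic_sum a m + s%:R ^- m.
Proof. exact: radix_value_bounds. Qed.

Lemma binary_value_bounds a m :
  beta_sum a m <= binary_value R (beta a) <= beta_sum a m + 2%:R ^- m.
Proof. by apply: radix_value_bounds => // n; case: (beta a n). Qed.

Lemma sadic_value_itv a : 0 <= sadic_value R a <= 1.
Proof. exact: radix_value_itv. Qed.

Lemma binary_value_itv a : 0 <= binary_value R (beta a) <= 1.
Proof. by apply: radix_value_itv => // n; case: (beta a n). Qed.

Lemma binary_value_pad a m c :
  binary_value R (beta (pad a m c)) = beta_sum a m + 2%:R ^- m * (beta (pad a m c) m)%:R.
Proof.
rewrite [LHS](@radix_value_shift _ 2 _ _ _ m) -/(beta_sum _ _) ?beta_sum_pad //; last first.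
  by move=> n; case: (beta _ n).
congr (_ + _ * _); under eq_fun do rewrite beta_seq_pad_tail.
rewrite radix_value_cst //; last by case: (beta _ m).
by rewrite -natr1 addrK divr1.
Qed.

Lemma sadic_value_surj y : 0 <= y <= 1 -> exists a, sadic_value R a = y.
Proof.
have s_gt0 : (0 < s)%N := ltnW s_gt1.
case/andP => y_ge0; rewrite le_eqVlt => /predU1P[->|y_lt1].
  have top_lt : (s.-1 < s)%N by rewrite ltn_predL.
  exists (fun=> Ordinal top_lt); rewrite [sadic_value _ _]radix_value_cst //=.
  have -> : s%:R - 1 = (s.-1)%:R :> R by rewrite -{1}(prednK s_gt0) -natr1 addrK.
  by rewrite divff // pnatr_eq0; lia.
exists (fun n => Ordinal (ltn_pmod (Num.truncn (y * s%:R ^+ n.+1)) s_gt0)).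
by apply: radix_value_digits; rewrite ?y_ge0.
Qed.

(* The two codes of the common endpoint of adjacent cylinders have the same image:
   this is why f is well defined. *)
Lemma binary_value_pad_adjacent a a' m (top bot : 'I_s) :
  (top : nat) = s.-1 -> (bot : nat) = 0%N ->
  cylinder_index a' m = (cylinder_index a m).+1 ->
  binary_value R (beta (pad a m top)) = binary_value R (beta (pad a' m bot)).
Proof.
move=> top_max bot_min; elim: m a a' => [//|m IH] a a'; rewrite /cylinder_index /= => e.
have [am_lt | am_max] := ltnP (a m).+1 s.
  have [eN ea] : cylinder_index a' m = cylinder_index a m /\ (a' m : nat) = (a m).+1.
    by move: (congr1 (edivn^~ s) e); rewrite -addnS !(mulnC s) !edivn_eq //; case.
  have a_top : (top == a m) = false by apply/negbTE; rewrite -val_eqE /= top_max; lia.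
  have a'_bot : (bot == a' m) = false by apply/negbTE; rewrite -val_eqE /= bot_min ea.
  have bit_sum (b : bool) : b%:R / 2%:R ^+ m.+1 + 2%:R ^- m.+1 * (~~ b)%:R = 2%:R ^- m.+1 :> R.
    by case: b; rewrite /= ?mulr0 ?mulr1 ?mul0r ?add0r ?addr0 // mul1r.
  rewrite !binary_value_pad !beta_seq_padS a_top a'_bot /beta_sum !radix_sumS.
  by rewrite -!/(beta_sum _ _) (eq_beta_sum_index (esym eN)) -!addrA !bit_sum.
have am : (a m : nat) = s.-1 by have := ltn_ord (a m); lia.
have [eN ea] : cylinder_index a' m = (cylinder_index a m).+1 /\ (a' m : nat) = 0%N.
  move: (congr1 (edivn^~ s) e); rewrite !(mulnC s) edivn_eq //.
  have -> : (cylinder_index a m * s + a m).+1 = (cylinder_index a m).+1 * s + 0.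
    by rewrite am; lia.
  by rewrite edivn_eq ?(ltnW s_gt1) //; case.
have ta : a m = top by apply: val_inj; rewrite /= top_max am.
have ba : a' m = bot by apply: val_inj; rewrite /= bot_min ea.
by rewrite -ta pad_id ta -ba pad_id ba; apply: IH.
Qed.

Lemma cylinder_index_near a a' m :
  `|sadic_value R a - sadic_value R a'| < s%:R ^- m ->
  (cylinder_index a' m < (cylinder_index a m).+2)%N.
Proof.
have /andP[lo hi] := sadic_value_bounds a m.
have /andP[lo' hi'] := sadic_value_bounds a' m.
rewrite !sadic_sum_index in lo hi lo' hi'; rewrite ltr_norml => /andP[near _].
have u_gt0 : 0 < s%:R ^- m :> R by rewrite invr_gt0 exprn_gt0 // ltr0n ltnW.
rewrite -(ltr_nat R) -!natr1 -subr_gt0 -(pmulr_lgt0 _ u_gt0); nra.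
Qed.

Lemma dist_binary_value_le a a' m :
  `|sadic_value R a - sadic_value R a'| < s%:R ^- m ->
  `|binary_value R (beta a) - binary_value R (beta a')| <= 2 * 2%:R ^- m.
Proof.
wlog idx_le : a a' / (cylinder_index a m <= cylinder_index a' m)%N.
  move=> wlog_le.
  have [/wlog_le//|/ltnW/wlog_le] := leqP (cylinder_index a m) (cylinder_index a' m).
  by rewrite distrC [X in _ -> X <= _]distrC.
move=> near; have idx_lt := cylinder_index_near near.
have u_gt0 : 0 < 2%:R ^- m :> R by rewrite invr_gt0 exprn_gt0.
have /andP[lo hi] := binary_value_bounds a m.
have /andP[lo' hi'] := binary_value_bounds a' m.
have [eN|eN] : cylinder_index a' m = cylinder_index a m \/
    cylinder_index a' m = (cylinder_index a m).+1 by lia.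
  rewrite (eq_beta_sum_index (esym eN)) in lo hi.
  by rewrite ler_norml; apply/andP; split; lra.
have top_lt : (s.-1 < s)%N by rewrite ltn_predL ltnW.
have bot_lt : (0 < s)%N by rewrite ltnW.
have := binary_value_pad_adjacent (top := Ordinal top_lt) (bot := Ordinal bot_lt) erefl erefl eN.
have /andP[plo phi] := binary_value_bounds (pad a m (Ordinal top_lt)) m.
have /andP[plo' phi'] := binary_value_bounds (pad a' m (Ordinal bot_lt)) m.
rewrite !beta_sum_pad in plo phi plo' phi' => ep; rewrite ep in plo phi.
by rewrite ler_norml; apply/andP; split; lra.
Qed.

End Codes.

Section CodedFunction.
Variable R : realType.
Variable s : nat.
Hypothesis s_gt1 : (1 < s)%N.
Variable A1 : {set 'I_s}.
Variables h_s h_2 f : R -> R.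
Hypothesis hs_code : coding_map h_s.
Hypothesis h2_code : coding_map h_2.
Hypothesis f_code : forall a : nat -> 'I_s,
  f (h_s (sadic_value R a)) = h_2 (binary_value R (beta_seq A1 a)).

Lemma exists_code x : 0 <= x <= 1 -> exists a : nat -> 'I_s, h_s (sadic_value R a) = x.
Proof.
move=> x01; have : (h_s @` `[0, 1]) x by rewrite hs_code.2.2 /= in_itv.
case=> y; rewrite /= in_itv => y01 <-.
by have [a <-] := sadic_value_surj s_gt1 y01; exists a.
Qed.

Lemma continuous_coded_function : {within `[0, 1]%classic, continuous f}.
Proof.
apply/continuous_withinP => x; rewrite /= in_itv => /exists_code[a0 <-] e e_gt0.
have [d2 d2_gt0 hd2] := coding_map_near h2_code (binary_value_itv R A1 a0) e_gt0.
have [m m_lt] : exists m, 2%:R ^- m < d2 / 2 :> R by apply: invexpn_lt; rewrite ?divr_gt0.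
have s_gt0 : 0 < s%:R ^- m :> R by rewrite invr_gt0 exprn_gt0 // ltr0n ltnW.
have [d d_gt0 hd] := coding_map_inverse_near hs_code (sadic_value_itv R s_gt1 a0) s_gt0.
exists d => // y; rewrite /= in_itv => /exists_code[a <-] near; rewrite !f_code.
apply: hd2; first exact: binary_value_itv.
apply: le_lt_trans (dist_binary_value_le s_gt1 A1 (hd _ (sadic_value_itv R s_gt1 a) near)) _; lra.
Qed.

End CodedFunction.

Lemma ler_sum_distinct3 (R : numDomainType) (I : finType) (F : I -> R) x y z :
  x != y -> x != z -> y != z -> (forall i, 0 <= F i) -> F x + F y + F z <= \sum_i F i.
Proof.
move=> xy xz yz F_ge0; rewrite (bigD1 x) // (bigD1 y) 1?eq_sym // (bigD1 z) /=.
  by rewrite !addrA lerDl sumr_ge0.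
by rewrite ![z == _]eq_sym xz yz.
Qed.

Lemma exists_two_other_digits s (d : 'I_s) : (2 < s)%N ->
  exists c1 c2 : 'I_s, [/\ c1 != d, c2 != d & c1 != c2].
Proof.
move=> s_gt2; have /card_gt1P[c1 [c2 [c1d c2d c12]]] : (1 < #|predC1 d|)%N.
  by rewrite cardC1 card_ord; lia.
by exists c1, c2.
Qed.

Section UnboundedVariation.
Variable R : realType.
Variable s : nat.
Hypothesis s_gt2 : (2 < s)%N.
Variable A1 : {set 'I_s}.
Variables h_s h_2 f : R -> R.
Hypothesis hs_code : coding_map h_s.
Hypothesis h2_code : coding_map h_2.
Hypothesis f_code : forall a : nat -> 'I_s,
  f (h_s (sadic_value R a)) = h_2 (binary_value R (beta_seq A1 a)).
Implicit Types (a g : nat -> 'I_s) (m n : nat).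

Let s_gt1 : (1 < s)%N := ltnW s_gt2.

Definition cylinder_variation a m :=
  image_variation f h_s (sadic_sum R a m) (sadic_sum R a m + s%:R ^- m).

Definition cylinder_jump a m :=
  `|h_2 (beta_sum R A1 a m + 2%:R ^- m) - h_2 (beta_sum R A1 a m)|.

Lemma cylinder_variation_ge0 a m : 0 <= cylinder_variation a m.
Proof. exact: image_variation_ge0. Qed.

Lemma cylinder_variation_pad a m c : cylinder_variation (pad a m c) m = cylinder_variation a m.
Proof. by rewrite /cylinder_variation sadic_sum_pad. Qed.

Lemma cylinder_jump_pad a m c : cylinder_jump (pad a m c) m = cylinder_jump a m.
Proof. by rewrite /cylinder_jump beta_sum_pad. Qed.

Lemma cylinder_jump_gt0 a m : 0 < cylinder_jump a m.
Proof.
have B0 := radix_sum_ge0 R 2 (fun n => beta_seq A1 a n) m.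
have B1 := beta_sum_le R A1 a m.
have t_gt0 : 0 < 2%:R ^- m :> R by rewrite invr_gt0 exprn_gt0.
set B := beta_sum _ _ _ _ in B0 B1 *.
have Bt_in : B + 2%:R ^- m \in `[0, 1] by rewrite in_itv /= B1 andbT addr_ge0 // ltW.
have B_in : B \in `[0, 1] by rewrite in_itv /= B0 (le_trans _ B1) // lerDl ltW.
rewrite normr_gt0 subr_eq0; apply/eqP => /(coding_map_inj h2_code Bt_in B_in)/eqP.
by rewrite -subr_eq0 addrAC subrr add0r gt_eqF.
Qed.

Lemma cylinder_jump_split g m c : g m.+1 = g m -> c != g m ->
  cylinder_jump g m.+1 = cylinder_jump g m.+2 + cylinder_jump (pad g m.+1 c) m.+2.
Proof.
move=> g_const cg; rewrite /cylinder_jump [beta_sum _ _ g m.+2]beta_sumS.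
rewrite [beta_sum _ _ (pad _ _ _) _]beta_sumS beta_sum_pad beta_seq_padS (negbTE cg).
rewrite /= g_const eqxx.
set B := beta_sum R A1 g m.+1; set t := 2%:R ^- m.+2.
have B0 : 0 <= B := radix_sum_ge0 _ _ _ _.
have t_gt0 : 0 < t by rewrite invr_gt0 exprn_gt0.
have tt : 2%:R ^- m.+1 = t + t :> R.
  by rewrite /t [2%:R ^+ m.+2]exprS invfM; field; rewrite expf_neq0.
have B1 := beta_sum_le R A1 g m.+1; rewrite -/B tt in B1; rewrite tt.
have Bt : B <= B + t by lra.
have Btt : B + t <= B + (t + t) by lra.
have := dist_between (coding_map_between h2_code B0 Bt Btt B1).
case: (beta_seq A1 g m) => /=;
  rewrite ?mulr1n ?mulr0n ?mulr0 ?mul1r ?mul0r ?addr0 ?addrA => -> //.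
exact: addrC.
Qed.

Lemma cylinder_jump_small g e : 0 < e ->
  exists N, forall n, (N <= n)%N -> cylinder_jump g n < e.
Proof.
move=> e_gt0; have e2_gt0 : 0 < e / 2 by rewrite divr_gt0.
have [d d_gt0 hd] := coding_map_near h2_code (binary_value_itv R A1 g) e2_gt0.
have [N N_lt] := invexpn_lt (ltnSn 1) d_gt0.
exists N => n Nn; have t_lt := le_lt_trans (invexpn_le R (ltnSn 1) Nn) N_lt.
have /andP[lo hi] := binary_value_bounds R A1 g n.
have B0 : 0 <= beta_sum R A1 g n := radix_sum_ge0 _ _ _ _.
have B1 := beta_sum_le R A1 g n.
have t_gt0 : 0 < 2%:R ^- n :> R by rewrite invr_gt0 exprn_gt0.
move: hd lo hi B0 B1 t_lt t_gt0; set G := binary_value _ _; set B := beta_sum _ _ _ _.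
set t := 2%:R ^- n => hd lo hi B0 B1 t_lt t_gt0.
have near_B : `|h_2 G - h_2 B| < e / 2.
  by apply: hd; [apply/andP; split; lra | rewrite ger0_norm; lra].
have near_Bt : `|h_2 G - h_2 (B + t)| < e / 2.
  by apply: hd; [apply/andP; split; lra | rewrite ler0_norm; lra].
rewrite /cylinder_jump -/B -/t; apply: le_lt_trans (ler_distD (h_2 G) _ _) _.
by rewrite distrC; lra.
Qed.

Section FiniteVariation.
Variable M : R.
Hypothesis f_bv : total_variation 0 1 f = M%:E.

Let cylinder_itv a m : 0 <= sadic_sum R a m /\ sadic_sum R a m + s%:R ^- m <= 1.
Proof. by split; [exact: radix_sum_ge0 | exact: sadic_sum_le]. Qed.

Lemma cylinder_variation_le a m : cylinder_variation a m <= M.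
Proof.
have [P0 P1] := cylinder_itv a m.
have s_gt0 : 0 < s%:R ^- m :> R by rewrite invr_gt0 exprn_gt0 // ltr0n ltnW.
rewrite /cylinder_variation.
by apply: (image_variation_le hs_code f_bv); apply/andP; split; lra.
Qed.

Lemma cylinder_jump_le_variation a m : cylinder_jump a m.+1 <= cylinder_variation a m.+1.
Proof.
have [c [_ [ca _ _]]] := exists_two_other_digits (a m) s_gt2.
have [P0 P1] := cylinder_itv a m.+1.
have in_cyl c' : sadic_sum R a m.+1 <= sadic_value R (pad a m.+1 c') <=
    sadic_sum R a m.+1 + s%:R ^- m.+1.
  by rewrite -(sadic_sum_pad R a m.+1 c') sadic_value_bounds.
have := image_variation_dist_le hs_code f_bv P0 (in_cyl (a m)) (in_cyl c) P1.
rewrite !f_code !binary_value_pad !beta_seq_padS eqxx (negbTE ca) /cylinder_jump.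
by case: (beta_seq A1 a m); rewrite /= ?mulr1n ?mulr0n ?mulr1 ?mulr0 ?addr0 // distrC.
Qed.

Lemma cylinder_variation_children g m :
  cylinder_variation g m = \sum_(x < s) cylinder_variation (pad g m x) m.+1.
Proof.
have [P0 P1] := cylinder_itv g m.
have e_gt0 : 0 < s%:R ^- m.+1 :> R by rewrite invr_gt0 exprn_gt0 // ltr0n ltnW.
have s_e : s%:R ^- m = s%:R * s%:R ^- m.+1 :> R.
  by rewrite exprS invfM mulrA mulfV ?mul1r // pnatr_eq0 gtn_eqF // ltnW.
rewrite /cylinder_variation s_e (image_variation_telescope hs_code f_bv P0 (ltW e_gt0)).
  by apply: eq_bigr => x _; rewrite sadic_sum_padS.
by rewrite -s_e.
Qed.

Lemma cylinder_variation_ge3 g m x y z : x != y -> x != z -> y != z ->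
  cylinder_variation (pad g m x) m.+1 + cylinder_variation (pad g m y) m.+1 +
  cylinder_variation (pad g m z) m.+1 <= cylinder_variation g m.
Proof.
move=> xy xz yz; rewrite [leRHS]cylinder_variation_children.
by apply: ler_sum_distinct3 => // i; exact: cylinder_variation_ge0.
Qed.

Section Doubling.
Variable K : R.
Hypothesis K_gt0 : 0 < K.
Hypothesis K_jump_le : forall a n, K * cylinder_jump a n.+1 <= cylinder_variation a n.+1.

Lemma cylinder_variation_step g m : g m.+1 = g m ->
  cylinder_variation g m.+2 + 2 * K * (cylinder_jump g m.+1 - cylinder_jump g m.+2) <=
  cylinder_variation g m.+1.
Proof.
move=> g_const; have [c1 [c2 [c1g c2g c12]]] := exists_two_other_digits (g m.+1) s_gt2.
have := cylinder_variation_ge3 g m.+1 (x := g m.+1) (y := c1) (z := c2).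
rewrite ![g m.+1 == _]eq_sym c1g c2g c12 => /(_ isT isT isT).
have -> : cylinder_variation (pad g m.+1 (g m.+1)) m.+2 = cylinder_variation g m.+2.
  by rewrite /cylinder_variation (eq_sadic_sum R (@pad_prefix _ g m.+1)).
have J1 := K_jump_le (pad g m.+1 c1) m.+1; have J2 := K_jump_le (pad g m.+1 c2) m.+1.
rewrite g_const in c1g c2g.
have child_jump c : c != g m ->
    cylinder_jump (pad g m.+1 c) m.+2 = cylinder_jump g m.+1 - cylinder_jump g m.+2.
  by move=> cg; rewrite (cylinder_jump_split g_const cg) addrAC subrr add0r.
rewrite child_jump // in J1; rewrite child_jump // in J2; nra.
Qed.

Lemma cylinder_variation_steps g n : (forall i, (n <= i)%N -> g i.+1 = g i) ->
  forall N, cylinder_variation g (n.+1 + N) +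
    2 * K * (cylinder_jump g n.+1 - cylinder_jump g (n.+1 + N)) <= cylinder_variation g n.+1.
Proof.
move=> g_const; elim=> [|N IH]; first by rewrite addn0 subrr mulr0 addr0.
have := cylinder_variation_step (g_const (n + N)%N (leq_addr _ _)).
rewrite addSn in IH; rewrite !addSn addnS; nra.
Qed.

Lemma cylinder_variation_double a n :
  2 * K * cylinder_jump a n.+1 <= cylinder_variation a n.+1.
Proof.
pose g := pad a n.+1 (a n).
have g_const i : (n <= i)%N -> g i.+1 = g i.
  move=> ni; rewrite /g /pad; have -> : (i.+1 < n.+1)%N = false by lia.
  by case: ltnP => // i_lt; have -> : i = n by lia.
rewrite -(cylinder_variation_pad a n.+1 (a n)) -(cylinder_jump_pad a n.+1 (a n)) -/g.
apply/ler_addgt0Pr => e e_gt0; have eK_gt0 : 0 < e / (2 * K) by rewrite divr_gt0 ?mulr_gt0.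
have [N jump_lt] := cylinder_jump_small g eK_gt0.
have := cylinder_variation_steps g_const N.
have := jump_lt (n.+1 + N)%N (leq_addl _ _).
rewrite ltr_pdivlMr ?mulr_gt0 //.
have := cylinder_variation_ge0 g (n.+1 + N); nra.
Qed.

End Doubling.

Lemma cylinder_variation_ge k a n :
  2 ^+ k * cylinder_jump a n.+1 <= cylinder_variation a n.+1.
Proof.
elim: k a n => [|k IH] a n; first by rewrite expr0 mul1r cylinder_jump_le_variation.
by rewrite exprS; apply: cylinder_variation_double; rewrite ?exprn_gt0.
Qed.

End FiniteVariation.

Lemma coded_function_total_variation : total_variation 0 1 f = +oo%E.
Proof.
have := total_variation_ge0 f ler01; case f_bv: total_variation => [M| |] // _; exfalso.
pose a : nat -> 'I_s := fun=> Ordinal (ltn_trans (ltn0Sn 1) s_gt2).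
have J_gt0 := cylinder_jump_gt0 a 1.
have var_le := cylinder_variation_le f_bv a 1.
have M_ge0 : 0 <= M := le_trans (cylinder_variation_ge0 a 1) var_le.
have /archi_boundP := divr_ge0 M_ge0 (ltW J_gt0); set k := Num.bound _ => Mk.
have k_exp : k%:R <= 2 ^+ k :> R by rewrite -natrX ler_nat ltnW // ltn_expl.
have := cylinder_variation_ge f_bv k a 0; rewrite ltr_pdivrMr // in Mk; nra.
Qed.

End UnboundedVariation.

(* In the statement below, [set: 'I_s] is a finset. *)
Local Close Scope classical_set_scope.

Theorem theorem4 (R : realType) (s : nat) (hs2 : (2 < s)%N)
  (A0 A1 : {set 'I_s})
  (hdisj : A0 :&: A1 = finset.set0) (hcov : A0 :|: A1 = [set: 'I_s])
  (hA0 : A0 != [set: 'I_s]) (hA1 : A1 != [set: 'I_s])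
  (h_s h_2 : R -> R) (hhs : coding_map h_s) (hh2 : coding_map h_2)
  (f : R -> R)
  (hf : forall alpha : nat -> 'I_s,
      f (h_s (sadic_value R alpha)) = h_2 (binary_value R (beta_seq A1 alpha))) :
  ({within `[0, 1]%classic, continuous f})%classic /\ total_variation 0 1 f = +oo%E.
Proof.
split; first exact (continuous_coded_function (ltnW hs2) hhs hh2 hf).
exact (coded_function_total_variation hs2 hhs hh2 hf).
Qed.
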